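(* Let $0\le j_2\le j_1$ be integers (so $(j_1,j_2,j_1-j_2)$ is admissible). Then $$\phi_{j_1,j_2,j_1-j_2}(x_{12},x_{13},1)=\sum_{a=0}^{j_2}\sum_{b=0}^{j_1-j_2}c_{a,b}\,(x_{12}+x_{12}^{-1})^{j_2-a}(x_{13}+x_{13}^{-1})^{j_1-j_2-b},$$ where $c_{a,b}=0$ if $a+b$ is odd, and if $a+b$ is even $$c_{a,b}=(-1)^{(a+b)/2}\binom{j_2}{a}\binom{j_1-j_2}{b}\frac{\left(j_1-\frac{a+b}{2}\right)!}{(j_1+1)!}\cdot\frac{(a+b)!}{\left(\frac{a+b}{2}\right)!}.$$
   Context: A triple $(j_1,j_2,j_3)$ of nonnegative integers is admissible if $|j_1-j_2|\le j_3\le j_1+j_2$ and $j_1+j_2+j_3$ is even; $\mathbf J$ denotes the set of admissible triples. Let $\mathcal H=\mathbb C[x_{12}+x_{12}^{-1},x_{13}+x_{13}^{-1},x_{23}+x_{23}^{-1}]\subset\mathbb C[x_{12}^{\pm1},x_{13}^{\pm1},x_{23}^{\pm1}]$. For $a,b\in\{\pm1\}$ set $K_{a,b}(j_1,j_2,j_3)=ab\,\frac{(aj_1+bj_2+j_3+a+b+2)(aj_1+bj_2-j_3+a+b)}{4(j_1+1)(j_2+1)}$. The genus two Schur polynomials $(\phi_{j_1,j_2,j_3})_{(j_1,j_2,j_3)\in\mathbf J}$ are the unique family in $\mathcal H$ with $\phi_{0,0,0}=1$ such that for all admissible $(j_1,j_2,j_3)$: $(x_{12}+x_{12}^{-1})\phi_{j_1,j_2,j_3}=\sum_{a,b\in\{\pm1\}}K_{a,b}(j_1,j_2,j_3)\phi_{j_1+a,j_2+b,j_3}$,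 $(x_{13}+x_{13}^{-1})\phi_{j_1,j_2,j_3}=\sum_{a,b\in\{\pm1\}}K_{a,b}(j_1,j_3,j_2)\phi_{j_1+a,j_2,j_3+b}$, $(x_{23}+x_{23}^{-1})\phi_{j_1,j_2,j_3}=\sum_{a,b\in\{\pm1\}}K_{a,b}(j_2,j_3,j_1)\phi_{j_1,j_2+a,j_3+b}$, where $\phi$ of a non-admissible triple is interpreted as $0$. *)

From HB Require Import structures.
From mathcomp Require Import all_boot all_order all_algebra.
From mathcomp Require Import complex.
From mathcomp Require Import Rstruct.
From mathcomp Require Import mpoly.
Set Implicit Arguments. Unset Strict Implicit. Unset Printing Implicit Defensive.
Import Order.TTheory GRing.Theory Num.Theory.
Local Open Scope ring_scope.

Notation C := (complex Rdefinitions.R).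

(* The ring H = C[x12+x12^-1, x13+x13^-1, x23+x23^-1] is a polynomial ring
   in the three algebraically independent elements
   y12 = x12+x12^-1, y13 = x13+x13^-1, y23 = x23+x23^-1.
   We represent H as {mpoly C[3]}, variable 0 = y12, 1 = y13, 2 = y23. *)
Notation HH := {mpoly C[3]}.
Definition y12 : HH := 'X_(@Ordinal 3 0 isT).
Definition y13 : HH := 'X_(@Ordinal 3 1 isT).
Definition y23 : HH := 'X_(@Ordinal 3 2 isT).

(* admissible triples (indices as integers, so that j+a with a = -1 makes sense) *)
Definition admissible (j1 j2 j3 : int) : bool :=
  [&& 0 <= j1, 0 <= j2, 0 <= j3,
      `|j1 - j2| <= j3, j3 <= j1 + j2 & (2 %| j1 + j2 + j3)%Z].

Definition ext (phi : int -> int -> int -> HH) (j1 j2 j3 : int) : HH :=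
  if admissible j1 j2 j3 then phi j1 j2 j3 else 0.

Definition K (a b j1 j2 j3 : int) : C :=
  ((a * b) * (a * j1 + b * j2 + j3 + a + b + 2) * (a * j1 + b * j2 - j3 + a + b))%:~R
  / (4 * (j1 + 1) * (j2 + 1))%:~R.

Definition signs : seq int := [:: 1; -1].

Definition is_genus2_schur (phi : int -> int -> int -> HH) : Prop :=
  phi 0 0 0 = 1 /\
  forall j1 j2 j3 : int, admissible j1 j2 j3 ->
    [/\ y12 * phi j1 j2 j3 =
          \sum_(a <- signs) \sum_(b <- signs)
             K a b j1 j2 j3 *: ext phi (j1 + a) (j2 + b) j3,
        y13 * phi j1 j2 j3 =
          \sum_(a <- signs) \sum_(b <- signs)
             K a b j1 j3 j2 *: ext phi (j1 + a) j2 (j3 + b) &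
        y23 * phi j1 j2 j3 =
          \sum_(a <- signs) \sum_(b <- signs)
             K a b j2 j3 j1 *: ext phi j1 (j2 + a) (j3 + b)].

(* Setting x23 = 1 means y23 = 1 + 1^-1 = 2. *)
Definition at_x23_1 (p : HH) : HH := p \mPo [tuple y12; y13; 2%:MP].

Definition coef_c (j1 j2 a b : nat) : C :=
  if odd (a + b) then 0 else
  (-1) ^+ ((a + b) %/ 2) * ('C(j2, a))%:R * ('C(j1 - j2, b))%:R
  * ((j1 - (a + b) %/ 2)`!)%:R / ((j1 + 1)`!)%:R
  * ((a + b)`!)%:R / (((a + b) %/ 2)`!)%:R.

(* Along the edge j1 = j2 + j3 write F n m := phi_{n+m,n,m}(x12, x13, 1).  The
   y12-recursion at (n+m, n, m) leaves the edge only through phi_{n+m-1,n+1,m}, and the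
   y23-recursion at x23 = 1 (where y23 = 2) expresses that value through edge values.
   Eliminating it gives a four-term recursion which, together with the y13-recursion
   at n = 0 and F 0 0 = 1, determines F.  The claimed polynomials, whose coefficient of
   y12^a y13^b is C(n,a) C(m,b) times a weight depending only on a + b, satisfy the same
   recursions: coefficientwise this is an identity between binomials and factorials.
   Their symmetry in (n, y12) <-> (m, y13) turns the boundary y13-recursion into the
   case m = 0 of the y12-recursion. *)

From HB Require Import structures.
From mathcomp Require Import all_boot all_order all_algebra.
From mathcomp Require Import complex Rstruct mpoly.
From mathcomp Require Import zify ring.
Set Implicit Arguments.
Unset Strict Implicit.
Unset Printing Implicit Defensive.
Import GRing.Theory Num.Theory.
Local Open Scope ring_scope.

Lemma natr_bin_down (R : pzRingType) (n a : nat) :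
  (n%:R - a%:R) * 'C(n, a)%:R = (n * 'C(n.-1, a))%:R :> R.
Proof.
have [le_an | lt_na] := leqP a n; first by rewrite -natrB // -natrM mul_bin_down.
by rewrite bin_small // mulr0 mul_bin_down (eqP (ltnW lt_na)).
Qed.

Lemma natr_bin_down2 (R : comPzRingType) (n a : nat) :
  (n%:R - a%:R) * ((n.+1%:R - a%:R) * 'C(n.+1, a)%:R) = (n.+1 * (n * 'C(n.-1, a)))%:R :> R.
Proof. by rewrite natr_bin_down natrM mulrCA natr_bin_down -natrM. Qed.

Definition shift {V : nmodType} (f : nat -> nat -> V) (a b : nat) : V :=
  if a is a'.+1 then f a' b else 0.

Ltac natr_neq0 :=
  repeat (apply/andP; split);
  repeat (rewrite -natrD || rewrite -natrM || rewrite nat1r || rewrite natr1);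
  rewrite ?pnatr_eq0 -?lt0n ?fact_gt0 //; lia.

Section EdgeCoefficients.

Variable R : numFieldType.

Definition edge_weight (N k : nat) : R :=
  (-1) ^+ k * ((N - k)`!)%:R * ((k.*2)`!)%:R / (((N.+1)`!)%:R * (k`!)%:R).

Definition degree_weight (N d : nat) : R :=
  if (d <= N)%N && ~~ odd (N - d) then edge_weight N ((N - d)./2) else 0.

(* The coefficient of y12^a y13^b in F n m; the paper's c_{n-a,m-b}. *)
Definition edge_coef (n m a b : nat) : R :=
  ('C(n, a) * 'C(m, b))%:R * degree_weight (n + m) (a + b).

(* The coefficients of the four-term y12-recursion along the edge. *)
Definition rec_c1 n m : R := (n + m).+2%:R / (n + m).+1%:R.
Definition rec_c2 n m : R := n%:R * (n + 2 * m).+1%:R / (n + m).+1%:R ^+ 2.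
Definition rec_c3 n m : R := 2 * m%:R ^+ 2 / (n + m).+1%:R ^+ 2.
Definition rec_c4 n m : R := - (m%:R * m.-1%:R) / (n + m).+1%:R ^+ 2.

Lemma edge_weightSn N k : (k <= N)%N ->
  edge_weight N.+1 k = edge_weight N k * (N.+1 - k)%:R / N.+2%:R.
Proof.
move=> le_kN; rewrite /edge_weight subSn // !factS !natrM -subSn //.
by field; natr_neq0.
Qed.

Lemma edge_weightSS N k : (k <= N)%N ->
  edge_weight N.+1 k.+1 = - edge_weight N k * (k.*2.+1 * 2)%:R / N.+2%:R.
Proof.
move=> le_kN; rewrite /edge_weight subSS doubleS !factS !natrM exprS -!mul2n.
by field; natr_neq0.
Qed.

Lemma degree_weight_edge N d k : N = (d + k.*2)%N -> degree_weight N d = edge_weight N k.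
Proof. by move=> ->; rewrite /degree_weight leq_addr addKn odd_double doubleK. Qed.

Lemma degree_weight_gt N d : (N < d)%N -> degree_weight N d = 0.
Proof. by move=> lt_Nd; rewrite /degree_weight leqNgt lt_Nd. Qed.

Lemma degree_weight_parity N d e :
  ~~ ((d <= N + e.*2)%N && ~~ odd (N + e.*2 - d)) -> degree_weight N d = 0.
Proof.
rewrite /degree_weight; case: ifP => // /andP [le_dN even_Nd].
by rewrite (leq_trans le_dN (leq_addr _ _)) -addnBAC // oddD odd_double addbF even_Nd.
Qed.

Lemma edge_coefC n m a b : edge_coef n m a b = edge_coef m n b a.
Proof. by rewrite /edge_coef mulnC addnC [(b + a)%N]addnC. Qed.

Lemma edge_coef_shift n m a b k : (n + m).+1 = (a + b + k.*2)%N ->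
  shift (edge_coef n m) a b =
  a%:R / n.+1%:R * ('C(n.+1, a) * 'C(m, b))%:R * edge_weight (n + m) k.
Proof.
case: a => [|a] eNk /=; first by rewrite !mul0r.
rewrite /edge_coef (@degree_weight_edge _ _ k); last by lia.
have bin_up : 'C(n, a)%:R = a.+1%:R * 'C(n.+1, a.+1)%:R / n.+1%:R :> R.
  by rewrite -natrM -(mul_bin_diag n.+1) natrM; field; natr_neq0.
by rewrite !natrM bin_up; field; natr_neq0.
Qed.

Lemma rec_c1_edge_coef n m a b k : (n + m).+1 = (a + b + k.*2)%N ->
  rec_c1 n m * edge_coef n.+1 m a b =
  ((n + m).+1 - k)%:R / (n + m).+1%:R * ('C(n.+1, a) * 'C(m, b))%:R
  * edge_weight (n + m) k.
Proof.
move=> eNk; rewrite /edge_coef (@degree_weight_edge _ _ k) addSn; last by lia.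
by rewrite edge_weightSn /rec_c1; [field; natr_neq0 | lia].
Qed.

Lemma edge_coef_gt n m a b : (n + m < a + b)%N -> edge_coef n m a b = 0.
Proof. by move=> lt_NN; rewrite /edge_coef degree_weight_gt ?mulr0. Qed.

Lemma edge_coef_parity n m a b e :
  ~~ ((a + b <= n + m + e.*2)%N && ~~ odd (n + m + e.*2 - (a + b))) ->
  edge_coef n m a b = 0.
Proof. by move=> off; rewrite /edge_coef (degree_weight_parity off) mulr0. Qed.

Lemma rec_c1_neq0 n m : rec_c1 n m != 0.
Proof. by rewrite /rec_c1 mulf_eq0 invr_eq0 !pnatr_eq0. Qed.

Lemma rec_c4n0 n : rec_c4 n 0 = 0.
Proof. by rewrite /rec_c4 !mul0r oppr0 mul0r. Qed.

Lemma edge_coef_rec_top n m a b : (n + m).+1 = (a + b)%N ->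
  shift (edge_coef n m) a b =
  rec_c1 n m * edge_coef n.+1 m a b + rec_c2 n m * edge_coef n.-1 m a b
  + rec_c3 n m * edge_coef n m.-1 a b + rec_c4 n m * edge_coef n.+1 m.-2 a b.
Proof.
move=> eN; have eN0 : (n + m).+1 = (a + b + 0.*2)%N by rewrite addn0.
rewrite (edge_coef_shift eN0) (rec_c1_edge_coef eN0) subn0.
rewrite [edge_coef n.-1 _ _ _]edge_coef_gt ?[edge_coef n _ _ _]edge_coef_gt; try lia.
have -> : rec_c4 n m * edge_coef n.+1 m.-2 a b = 0.
  by case: m eN {eN0} => [|m] eN; rewrite ?rec_c4n0 ?mul0r // edge_coef_gt ?mulr0 //; lia.
rewrite !mulr0 !addr0.
have [-> | ne_an] := eqVneq a n.+1; first by field; natr_neq0.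
suff -> : ('C(n.+1, a) * 'C(m, b) = 0)%N by rewrite !mulr0 !mul0r.
have [lt_na | le_an] := ltnP n.+1 a; first by rewrite bin_small.
by rewrite (@bin_small m b) ?muln0 //; lia.
Qed.

Lemma edge_coef_rec_off n m a b :
  ~~ ((a + b <= (n + m).+1)%N && ~~ odd ((n + m).+1 - (a + b))) ->
  shift (edge_coef n m) a b =
  rec_c1 n m * edge_coef n.+1 m a b + rec_c2 n m * edge_coef n.-1 m a b
  + rec_c3 n m * edge_coef n m.-1 a b + rec_c4 n m * edge_coef n.+1 m.-2 a b.
Proof.
move=> off.
have off0 n' m' : (n' + m' = (n + m).+1)%N -> edge_coef n' m' a b = 0.
  by move=> eN; apply: (@edge_coef_parity _ _ _ _ 0); rewrite addn0 eN.
have off1 n' m' : ((n' + m').+1 = n + m)%N -> edge_coef n' m' a b = 0.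
  move=> eN; apply: (@edge_coef_parity _ _ _ _ 1).
  by rewrite (_ : (n' + m' + 1.*2 = (n + m).+1)%N) //; lia.
rewrite off0; last by lia.
have -> : rec_c2 n m * edge_coef n.-1 m a b = 0.
  case: n {off0} off off1 => [|n] _ off1; first by rewrite /rec_c2 !mul0r.
  by rewrite off1 ?mulr0 //; lia.
have -> : rec_c3 n m * edge_coef n m.-1 a b = 0.
  case: m {off0} off off1 => [|m] _ off1; first by rewrite /rec_c3 expr0n !mulr0 !mul0r.
  by rewrite off1 ?mulr0 //; lia.
have -> : rec_c4 n m * edge_coef n.+1 m.-2 a b = 0.
  case: m {off0} off off1 => [|[|m]] _ off1; first by rewrite rec_c4n0 mul0r.
    by rewrite /rec_c4 mulr0 oppr0 !mul0r.
  by rewrite off1 ?mulr0 //; lia.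
case: a {off0 off1} off => [|a] off; rewrite !mulr0 !addr0 //=.
by apply: (@edge_coef_parity _ _ _ _ 0); rewrite addn0; move: off; rewrite addSn ltnS subSS.
Qed.

Section InnerTerms.

Variables (n m a b k : nat).
Hypothesis eNk : (n + m = (a + b + k.*2).+1)%N.

Lemma rec_c2_edge_coef : rec_c2 n m * edge_coef n.-1 m a b =
  (n + 2 * m).+1%:R / (n.+1%:R * (n + m).+1%:R ^+ 2)
  * ((n%:R - a%:R) * ((n.+1%:R - a%:R) * 'C(n.+1, a)%:R)) * 'C(m, b)%:R
  * edge_weight (a + b + k.*2) k.
Proof.
rewrite natr_bin_down2.
case: n eNk => [|n'] eNk'; first by rewrite /rec_c2 !mul0r mul0n muln0 mulr0 !mul0r.
rewrite /edge_coef /= (_ : (n' + m)%N = (a + b + k.*2)%N); last by lia.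
by rewrite (degree_weight_edge erefl) /rec_c2 !natrM; field; natr_neq0.
Qed.

Lemma rec_c3_edge_coef : rec_c3 n m * edge_coef n m.-1 a b =
  (2 * m)%:R / (n.+1%:R * (n + m).+1%:R ^+ 2)
  * ((n.+1%:R - a%:R) * 'C(n.+1, a)%:R) * ((m%:R - b%:R) * 'C(m, b)%:R)
  * edge_weight (a + b + k.*2) k.
Proof.
rewrite !natr_bin_down /=.
case: m eNk => [|m'] eNk'; first by rewrite /rec_c3 expr0n /= !mulr0 !mul0r.
rewrite /edge_coef /= (_ : (n + m')%N = (a + b + k.*2)%N); last by lia.
by rewrite (degree_weight_edge erefl) /rec_c3 !natrM; field; natr_neq0.
Qed.

Lemma rec_c4_edge_coef : rec_c4 n m * edge_coef n.+1 m.-2 a b =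
  - 1 / (n + m).+1%:R ^+ 2 * 'C(n.+1, a)%:R
  * ((m%:R - 1 - b%:R) * ((m%:R - b%:R) * 'C(m, b)%:R))
  * edge_weight (a + b + k.*2) k.
Proof.
rewrite natr_bin_down.
case: m eNk => [|[|m']] eNk'.
- by rewrite /rec_c4 !(mul0r, oppr0, mul0n, mulr0).
- rewrite /rec_c4 mulr0 oppr0 !mul0r subrr.
  by case: b eNk' => [|b'] _; rewrite ?subr0 ?bin0n !(mulr0, mul0r).
have -> : (m'.+2%:R - 1 : R) = m'.+1%:R by rewrite -natr1 addrK.
rewrite natrM /= [(m'.+1%:R - _) * _]mulrCA natr_bin_down /edge_coef /=.
rewrite (_ : (n.+1 + m')%N = (a + b + k.*2)%N); last by lia.
by rewrite (degree_weight_edge erefl) /rec_c4 !natrM /=; field; natr_neq0.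
Qed.

Lemma edge_coef_rec_inner : shift (edge_coef n m) a b =
  rec_c1 n m * edge_coef n.+1 m a b + rec_c2 n m * edge_coef n.-1 m a b
  + rec_c3 n m * edge_coef n m.-1 a b + rec_c4 n m * edge_coef n.+1 m.-2 a b.
Proof.
have eNk1 : (n + m).+1 = (a + b + k.+1.*2)%N by rewrite eNk doubleS; lia.
rewrite (edge_coef_shift eNk1) (rec_c1_edge_coef eNk1).
rewrite rec_c2_edge_coef rec_c3_edge_coef rec_c4_edge_coef eNk edge_weightSS; last by lia.
have em : m%:R = (a + b + k.*2).+1%:R - n%:R :> R.
  by rewrite -natrB; [congr _%:R | ]; lia.
rewrite natrB; last by lia.
rewrite -[(n + 2 * m).+1]addn1 !natrD !natrM em -!natr1 !natrD -!mul2n !natrM.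
by field; natr_neq0.
Qed.

End InnerTerms.

Lemma edge_coef_rec n m a b :
  shift (edge_coef n m) a b =
  rec_c1 n m * edge_coef n.+1 m a b + rec_c2 n m * edge_coef n.-1 m a b
  + rec_c3 n m * edge_coef n m.-1 a b + rec_c4 n m * edge_coef n.+1 m.-2 a b.
Proof.
have [/andP [le_dN even_Nd] | off] := boolP ((a + b <= (n + m).+1)%N
  && ~~ odd ((n + m).+1 - (a + b))); last exact: edge_coef_rec_off.
have := odd_double_half ((n + m).+1 - (a + b)); rewrite (negbTE even_Nd) add0n.
case: ((n + m).+1 - (a + b))./2 => [|k] eNk.
  by apply: edge_coef_rec_top; lia.
by apply: (@edge_coef_rec_inner _ _ _ _ k); rewrite doubleS in eNk; lia.
Qed.

End EdgeCoefficients.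

Section BivariateSums.

Variables (R : pzRingType) (A : comAlgType R) (x y : A).

Definition bisum (M1 M2 : nat) (f : nat -> nat -> R) : A :=
  \sum_(a < M1) \sum_(b < M2) f a b *: (x ^+ a * y ^+ b).

Definition supported (M1 M2 : nat) (f : nat -> nat -> R) :=
  forall a b, (M1 <= a)%N || (M2 <= b)%N -> f a b = 0.

Lemma eq_bisum M1 M2 f g : f =2 g -> bisum M1 M2 f = bisum M1 M2 g.
Proof. by move=> eq_fg; apply: eq_bigr => a _; apply: eq_bigr => b _; rewrite eq_fg. Qed.

Lemma bisumD M1 M2 f g :
  bisum M1 M2 f + bisum M1 M2 g = bisum M1 M2 (fun a b => f a b + g a b).
Proof.
rewrite -big_split; apply: eq_bigr => a _.
by rewrite -big_split; apply: eq_bigr => b _; rewrite scalerDl.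
Qed.

Lemma bisumZ M1 M2 c f : c *: bisum M1 M2 f = bisum M1 M2 (fun a b => c * f a b).
Proof.
rewrite scaler_sumr; apply: eq_bigr => a _.
by rewrite scaler_sumr; apply: eq_bigr => b _; rewrite scalerA.
Qed.

Lemma bisum_widen M1 M2 M1' M2' f : (M1 <= M1')%N -> (M2 <= M2')%N ->
  supported M1 M2 f -> bisum M1' M2' f = bisum M1 M2 f.
Proof.
move=> le_M1 le_M2 suppf; rewrite /bisum.
rewrite (big_ord_widen _ (fun a => \sum_(b < M2) f a b *: (x ^+ a * y ^+ b)) le_M1).
rewrite [RHS]big_mkcond; apply: eq_bigr => a _ /=.
have [lt_aM1 | out_a] := ltnP a M1; last first.
  by rewrite big1 // => b _; rewrite suppf ?out_a ?scale0r.
rewrite (big_ord_widen _ (fun b => f a b *: (x ^+ a * y ^+ b)) le_M2) [RHS]big_mkcond /=.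
apply: eq_bigr => b _; case: ltnP => // out_b.
by rewrite suppf ?out_b ?orbT ?scale0r.
Qed.

Lemma mul_bisum M1 M2 f : x * bisum M1 M2 f = bisum M1.+1 M2 (shift f).
Proof.
rewrite /bisum big_ord_recl /= [X in X + _]big1 ?add0r => [|b _]; last first.
  by rewrite scale0r.
rewrite mulr_sumr; apply: eq_bigr => a _; rewrite mulr_sumr; apply: eq_bigr => b _.
by rewrite -scalerAr mulrA -exprS.
Qed.

End BivariateSums.

Lemma bisumC (R : pzRingType) (A : comAlgType R) (x y : A) M1 M2 f :
  bisum x y M1 M2 f = bisum y x M2 M1 (fun a b => f b a).
Proof.
rewrite /bisum exchange_big; apply: eq_bigr => b _.
by apply: eq_bigr => a _; rewrite mulrC.
Qed.

Section EdgePolynomials.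

Variables (R : numFieldType) (A : comAlgType R) (x y : A).

Definition edge_poly n m : A := bisum x y n.+1 m.+1 (edge_coef R n m).

Lemma supported_edge_coef n m : supported n.+1 m.+1 (edge_coef R n m).
Proof.
move=> a b out; rewrite /edge_coef.
have [lt_na | le_an] := ltnP n a; first by rewrite bin_small ?mul0n ?mul0r.
by rewrite (@bin_small m b) ?muln0 ?mul0r //; lia.
Qed.

Lemma edge_poly_widen n m M1 M2 :
  (n < M1)%N -> (m < M2)%N -> edge_poly n m = bisum x y M1 M2 (edge_coef R n m).
Proof.
move=> lt_nM lt_mM; rewrite [RHS](@bisum_widen _ _ x y n.+1 m.+1) //.
exact: supported_edge_coef.
Qed.

Lemma edge_poly_rec n m :
  x * edge_poly n m = rec_c1 R n m *: edge_poly n.+1 m + rec_c2 R n m *: edge_poly n.-1 m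
    + rec_c3 R n m *: edge_poly n m.-1 + rec_c4 R n m *: edge_poly n.+1 m.-2.
Proof.
rewrite mul_bisum !(@edge_poly_widen _ _ n.+2 m.+1) //; try lia.
by rewrite !bisumZ !bisumD; apply: eq_bisum => a b; exact: edge_coef_rec.
Qed.

Lemma edge_poly00 : edge_poly 0 0 = 1.
Proof.
rewrite /edge_poly /bisum !big_ord1 /= expr0 mulr1.
by rewrite /edge_coef /degree_weight /edge_weight /= !mul1r invr1 scale1r.
Qed.

End EdgePolynomials.

Lemma edge_polyC (R : numFieldType) (A : comAlgType R) (x y : A) n m :
  edge_poly x y n m = edge_poly y x m n.
Proof. by rewrite /edge_poly bisumC; apply: eq_bisum => a b; rewrite edge_coefC. Qed.

Lemma edge_poly_rec_base (R : numFieldType) (A : comAlgType R) (x y : A) m :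
  y * edge_poly x y 0 m
    = rec_c1 R m 0 *: edge_poly x y 0 m.+1 + rec_c2 R m 0 *: edge_poly x y 0 m.-1.
Proof.
rewrite !(edge_polyC x) edge_poly_rec rec_c4n0 scale0r addr0.
by rewrite /rec_c3 expr0n /= mulr0 mul0r scale0r addr0.
Qed.

Section RecursionUniqueness.

Variables (R : fieldType) (V : lmodType R) (L1 L2 : V -> V).
Variables (c1 c2 c3 c4 : nat -> nat -> R) (b1 b2 : nat -> R).
Hypotheses (c1_neq0 : forall n m, c1 n m != 0) (b1_neq0 : forall m, b1 m != 0).
(* Otherwise the fourth term at m = 0 would be the unknown F n.+1 0 itself (0.-2 = 0). *)
Hypothesis c4n0 : forall n, c4 n 0 = 0.

Definition edge_recursive (F : nat -> nat -> V) :=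
  (forall n m, L1 (F n m) = c1 n m *: F n.+1 m + c2 n m *: F n.-1 m
                            + c3 n m *: F n m.-1 + c4 n m *: F n.+1 m.-2)
  /\ forall m, L2 (F 0 m) = b1 m *: F 0 m.+1 + b2 m *: F 0 m.-1.

Lemma edge_recursive_unique F G :
  edge_recursive F -> edge_recursive G -> F 0 0 = G 0 0 -> F =2 G.
Proof.
move=> [recF baseF] [recG baseG] FG00.
suff eqFG T n m : (n + m <= T)%N -> F n m = G n m by move=> n m; apply: (eqFG (n + m)%N).
elim: T n m => [|T IH] n m le_NT; first by have [-> ->] : n = 0%N /\ m = 0%N by lia.
have [|lt_TN] := leqP (n + m) T; first exact: IH.
case: n le_NT lt_TN => [|n] le_NT lt_TN.
  have -> : m = T.+1 by lia.
  have := congr1 L2 (IH 0%N T (leqnn T)).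
  rewrite baseF baseG (IH 0%N T.-1) ?leq_pred // => /addIr.
  exact: scalerI.
have eq4 : c4 n m *: F n.+1 m.-2 = c4 n m *: G n.+1 m.-2.
  by case: m le_NT lt_TN => [|m] le_NT lt_TN; rewrite ?c4n0 ?scale0r // IH //; lia.
have : L1 (F n m) = L1 (G n m) by rewrite IH //; lia.
rewrite recF recG eq4 (IH n.-1 m) ?(IH n m.-1); try lia.
by move/addIr/addIr/addIr/(scalerI (c1_neq0 n m)).
Qed.

End RecursionUniqueness.

Section OffTermElimination.

Variables (R : fieldType) (V : lmodType R).
Variables (c1 c2 c3 c4 k s : R) (X1 X2 X3 X4 Y : V).

Lemma drop_off_term : k = 0 -> c2 = s -> c3 = 0 -> c4 = 0 ->
  c1 *: X1 + k *: Y + s *: X2 = c1 *: X1 + c2 *: X2 + c3 *: X3 + c4 *: X4.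
Proof. by move=> -> -> -> ->; rewrite !scale0r !addr0. Qed.

Lemma eliminate_off_term (u v : R) :
  2 *: X3 = u *: Y + v *: X4 + s *: X2 -> u != 0 ->
  c2 = s - k / u * s -> c3 = k / u * 2 -> c4 = - (k / u * v) ->
  c1 *: X1 + k *: Y + s *: X2 = c1 *: X1 + c2 *: X2 + c3 *: X3 + c4 *: X4.
Proof.
move=> rec23 u_neq0 -> -> ->.
have -> : Y = u^-1 *: (2 *: X3 - v *: X4 - s *: X2).
  by rewrite rec23 addrAC !addrK scalerA mulVf ?scale1r.
rewrite scalerA !scalerBr !scalerA scalerBl scaleNr -!addrA; congr (_ + _).
by rewrite [LHS]addrA [LHS]addrC -[LHS]addrA [LHS]addrCA.
Qed.

End OffTermElimination.

Ltac K_field := rewrite /K !(intrM, intrD, intrN) /= -?pmulrn; field; natr_neq0.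

Lemma K_edge12 (n m : nat) : let N := (n + m)%:Z in
  [/\ K 1 1 N n m = rec_c1 C n m, K 1 (-1) N n m = 0,
      K (-1) 1 N n m = m%:R / ((n + m).+1 * n.+1)%:R & K (-1) (-1) N n m = n%:R / n.+1%:R].
Proof. by split; rewrite /rec_c1; K_field. Qed.

Lemma K_edge23 (n m : nat) : let N := (n + m)%:Z in
  [/\ K 1 1 n m N = (n + m).+2%:R / (n.+1 * m.+1)%:R, K 1 (-1) n m N = m%:R / m.+1%:R,
      K (-1) 1 n m N = n%:R / n.+1%:R & K (-1) (-1) n m N = 0].
Proof. by split; K_field. Qed.

Lemma K_edge13 (m : nat) :
  [/\ K 1 1 m m 0 = rec_c1 C m 0, K 1 (-1) m m 0 = 0,
      K (-1) 1 m m 0 = 0 & K (-1) (-1) m m 0 = rec_c2 C m 0].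
Proof. by split; rewrite /rec_c1 /rec_c2; K_field. Qed.

Lemma at_x23_1D p q : at_x23_1 (p + q) = at_x23_1 p + at_x23_1 q.
Proof. exact: raddfD. Qed.

Lemma at_x23_1Z c p : at_x23_1 (c *: p) = c *: at_x23_1 p.
Proof. exact: comp_mpolyZ. Qed.

Lemma at_x23_1M p q : at_x23_1 (p * q) = at_x23_1 p * at_x23_1 q.
Proof. exact: rmorphM. Qed.

Lemma at_x23_1_y12 : at_x23_1 y12 = y12. Proof. exact: comp_mpolyXU. Qed.
Lemma at_x23_1_y13 : at_x23_1 y13 = y13. Proof. exact: comp_mpolyXU. Qed.
Lemma at_x23_1_y23 : at_x23_1 y23 = 2%:MP. Proof. exact: comp_mpolyXU. Qed.

Definition at_x23_1E :=
  (at_x23_1D, at_x23_1Z, at_x23_1M, at_x23_1_y12, at_x23_1_y13, at_x23_1_y23).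

Lemma admissible_edge (n m : nat) : admissible (n + m)%:Z n%:Z m%:Z.
Proof.
rewrite /admissible (_ : (n + m)%:Z + n%:Z + m%:Z = 2 * (n + m)%:Z); last by lia.
by rewrite dvdz_mulr ?dvdzz // andbT; lia.
Qed.

Lemma admissible_off (n m : nat) : admissible (n + m)%:Z n.+1%:Z m.+1%:Z.
Proof.
rewrite /admissible (_ : (n + m)%:Z + n.+1%:Z + m.+1%:Z = 2 * (n + m).+1%:Z); last by lia.
by rewrite dvdz_mulr ?dvdzz // andbT; lia.
Qed.

Definition schur_edge (phi : int -> int -> int -> HH) (n m : nat) : HH :=
  at_x23_1 (phi (n + m)%:Z n%:Z m%:Z).

Definition schur_off (phi : int -> int -> int -> HH) (n m : nat) : HH :=
  at_x23_1 (phi (n + m)%:Z n.+1%:Z m.+1%:Z).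

(* The alternative d = 0 covers boundary terms, whose triples need not be admissible. *)
Lemma scale_ext_edge phi (c d : C) (i j k : int) (n m : nat) : c = d ->
  d = 0 \/ [/\ i = (n + m)%:Z, j = n%:Z & k = m%:Z] ->
  c *: at_x23_1 (ext phi i j k) = d *: schur_edge phi n m.
Proof.
move=> ->; case=> [-> | [-> -> ->]]; first by rewrite [LHS]scale0r [RHS]scale0r.
by rewrite /ext admissible_edge.
Qed.

Lemma scale_ext_off phi (c d : C) (i j k : int) (n m : nat) : c = d ->
  d = 0 \/ [/\ i = (n + m)%:Z, j = n.+1%:Z & k = m.+1%:Z] ->
  c *: at_x23_1 (ext phi i j k) = d *: schur_off phi n m.
Proof.
move=> ->; case=> [-> | [-> -> ->]]; first by rewrite [LHS]scale0r [RHS]scale0r.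
by rewrite /ext admissible_off.
Qed.

Section SchurEdgeRecursions.

Variable phi : int -> int -> int -> HH.
Hypothesis schur_phi : is_genus2_schur phi.

Lemma schur_edge_rec12 n m : y12 * schur_edge phi n m =
  rec_c1 C n m *: schur_edge phi n.+1 m
  + (m%:R / ((n + m).+1 * n.+1)%:R) *: schur_off phi n m.-1
  + (n%:R / n.+1%:R) *: schur_edge phi n.-1 m.
Proof.
have [_ /(_ _ _ _ (admissible_edge n m)) [+ _ _]] := schur_phi.
move/(congr1 at_x23_1); rewrite /signs !big_cons !big_nil !addr0 !at_x23_1E => ->.
have [K11 K1N KN1 KNN] := K_edge12 n m.
rewrite -[RHS]addrA -[X in _ = X + _]addr0.
(* Compare term by term: rewriting here would make the unifier evaluate [admissible] on
   symbolic arguments. *)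
apply: congr2; [apply: congr2 | apply: congr2].
- by apply: scale_ext_edge K11 _; right; split; lia.
- by rewrite K1N scale0r.
- apply: scale_ext_off KN1 _.
  by have [-> | m_gt0] := posnP m; [left; rewrite mul0r | right; split; lia].
- apply: scale_ext_edge KNN _.
  by have [-> | n_gt0] := posnP n; [left; rewrite mul0r | right; split; lia].
Qed.

Lemma schur_edge_rec23 n m : 2 *: schur_edge phi n m =
  ((n + m).+2%:R / (n.+1 * m.+1)%:R) *: schur_off phi n m
  + (m%:R / m.+1%:R) *: schur_edge phi n.+1 m.-1
  + (n%:R / n.+1%:R) *: schur_edge phi n.-1 m.+1.
Proof.
have [_ /(_ _ _ _ (admissible_edge n m)) [_ _ +]] := schur_phi.
move/(congr1 at_x23_1); rewrite /signs !big_cons !big_nil !addr0 !at_x23_1E.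
rewrite mul_mpolyC => ->.
have [K11 K1N KN1 KNN] := K_edge23 n m.
rewrite -[RHS]addr0 -[RHS]addrA.
apply: congr2; [apply: congr2 | apply: congr2].
- by apply: scale_ext_off K11 _; right; split; lia.
- apply: scale_ext_edge K1N _.
  by have [-> | m_gt0] := posnP m; [left; rewrite mul0r | right; split; lia].
- apply: scale_ext_edge KN1 _.
  by have [-> | n_gt0] := posnP n; [left; rewrite mul0r | right; split; lia].
- by rewrite KNN scale0r.
Qed.

Lemma schur_edge_rec13 m : y13 * schur_edge phi 0 m =
  rec_c1 C m 0 *: schur_edge phi 0 m.+1 + rec_c2 C m 0 *: schur_edge phi 0 m.-1.
Proof.
have [_ /(_ _ _ _ (admissible_edge 0 m)) [_ + _]] := schur_phi.
move/(congr1 at_x23_1); rewrite /signs !big_cons !big_nil !addr0 !at_x23_1E => ->.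
have [K11 K1N KN1 KNN] := K_edge13 m.
rewrite -[X in _ = X + _]addr0 -[X in _ = _ + X]add0r.
apply: congr2; [apply: congr2 | apply: congr2].
- by apply: scale_ext_edge K11 _; right; split; lia.
- by rewrite K1N scale0r.
- by rewrite KN1 scale0r.
- apply: scale_ext_edge KNN _.
  by have [-> | m_gt0] := posnP m; [left; rewrite /rec_c2 !mul0r | right; split; lia].
Qed.

Lemma schur_edge_rec n m : y12 * schur_edge phi n m =
  rec_c1 C n m *: schur_edge phi n.+1 m + rec_c2 C n m *: schur_edge phi n.-1 m
  + rec_c3 C n m *: schur_edge phi n m.-1 + rec_c4 C n m *: schur_edge phi n.+1 m.-2.
Proof.
rewrite schur_edge_rec12; case: m => [|m].
  apply: drop_off_term; first exact: mul0r.
  - by rewrite /rec_c2; field; natr_neq0.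
  - by rewrite /rec_c3 expr0n /= mulr0 mul0r.
  - exact: rec_c4n0.
apply: (eliminate_off_term _ _ (schur_edge_rec23 n m)).
- by rewrite mulf_eq0 invr_eq0 !pnatr_eq0 muln_eq0.
- by rewrite /rec_c2; field; natr_neq0.
- by rewrite /rec_c3; field; natr_neq0.
- by rewrite /rec_c4; field; natr_neq0.
Qed.

End SchurEdgeRecursions.

Lemma schur_edgeE phi : is_genus2_schur phi -> schur_edge phi =2 edge_poly y12 y13.
Proof.
move=> schur_phi.
apply: (@edge_recursive_unique _ _ (fun p => y12 * p) (fun p => y13 * p)
  _ _ _ _ (fun m => rec_c1 C m 0) (fun m => rec_c2 C m 0)).
- exact: rec_c1_neq0.
- by move=> m; exact: rec_c1_neq0.
- exact: rec_c4n0.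
- by split; [exact: schur_edge_rec | exact: schur_edge_rec13].
- by split; [exact: edge_poly_rec | exact: edge_poly_rec_base].
- by case: schur_phi => phi000 _; rewrite edge_poly00 /schur_edge phi000 /at_x23_1 comp_mpoly1.
Qed.

Lemma coef_c_edge_coef n m a b : (a <= n)%N -> (b <= m)%N ->
  coef_c (n + m) n (n - a) (m - b) = edge_coef C n m a b.
Proof.
move=> le_an le_bm; rewrite /coef_c.
have -> : (n - a + (m - b) = n + m - (a + b))%N by lia.
rewrite /edge_coef /degree_weight addKn (bin_sub le_an) (bin_sub le_bm).
rewrite (_ : a + b <= n + m)%N /=; last by lia.
move: (n + m - (a + b))%N => s; have [_ | even_s] := boolP (odd s).
  by rewrite mulr0.
have [k ->] : exists k, s = k.*2.
  by exists s./2; rewrite -[LHS]odd_double_half (negbTE even_s).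
rewrite /= divn2 doubleK /edge_weight addn1 natrM -!mul2n.
by field; natr_neq0.
Qed.

Lemma sum_coef_c n m :
  \sum_(a < n.+1) \sum_(b < (n + m - n).+1)
     coef_c (n + m) n a b *: (y12 ^+ (n - a) * y13 ^+ (n + m - n - b))
  = edge_poly y12 y13 n m.
Proof.
rewrite addKn /edge_poly /bisum (reindex_inj rev_ord_inj); apply: eq_bigr => a _.
rewrite (reindex_inj rev_ord_inj); apply: eq_bigr => b _ /=.
have le_an : (a <= n)%N by rewrite -ltnS.
have le_bm : (b <= m)%N by rewrite -ltnS.
by rewrite !subSS !subKn // coef_c_edge_coef ?leq_subr.
Qed.

Theorem mainTheorem14 (phi : int -> int -> int -> HH) (j1 j2 : nat) :
  is_genus2_schur phi -> (j2 <= j1)%N ->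
  at_x23_1 (phi j1%:Z j2%:Z (j1 - j2)%N%:Z) =
  \sum_(a < j2.+1) \sum_(b < (j1 - j2).+1)
     coef_c j1 j2 a b *: (y12 ^+ (j2 - a) * y13 ^+ (j1 - j2 - b)).
Proof.
move=> schur_phi le_j2j1.
have [m ->] : exists m, j1 = (j2 + m)%N by exists (j1 - j2)%N; rewrite subnKC.
by rewrite sum_coef_c -(schur_edgeE schur_phi) /schur_edge addKn.
Qed.
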